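(* Let $(X,\mu)$ be a measure space with $\mu$ nonatomic and $\mu\neq 0$, let $\mathcal{H}$ be a Hilbert space, and let $(e_x)_{x\in X}$ be a norm-bounded family in $\mathcal{H}$. Suppose that for $\mu$-almost every $x\in X$, for $\mu$-almost every $y\in X$, $\langle e_x,e_y\rangle=0$. Then for every $f\in\mathcal{H}$, $\langle f,e_x\rangle = 0$ for $\mu$-almost every $x\in X$.
   Context: Here ''for $\mu$-almost every $x$, $P(x)$'' means that the set of $x$ where $P(x)$ fails is contained in a measurable $\mu$-null set (the set itself need not be measurable); in the hypothesis, this is required of the set of $x$ for which $\{y : \langle e_x,e_y\rangle\neq 0\}$ is not contained in a null set. *)

From Stdlib Require Import Reals.
Open Scope R_scope.

Inductive ereal : Type := Fin (r : R) | PInf.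

Definition ereal_le (a b : ereal) : Prop :=
  match a, b with
  | Fin x, Fin y => x <= y
  | _, PInf => True
  | PInf, Fin _ => False
  end.

Definition ereal_lt (a b : ereal) : Prop :=
  match a, b with
  | Fin x, Fin y => x < y
  | Fin _, PInf => True
  | PInf, _ => False
  end.

Definition fin_part (a : ereal) : R := match a with Fin r => r | PInf => 0 end.

Definition esum_to (a : nat -> ereal) (s : ereal) : Prop :=
  match s with
  | Fin l => (forall n, a n <> PInf) /\
             Un_cv (fun N => sum_f_R0 (fun n => fin_part (a n)) N) l
  | PInf => (exists n, a n = PInf) \/
            ((forall n, a n <> PInf) /\
             cv_infty (fun N => sum_f_R0 (fun n => fin_part (a n)) N))
  end.

Record measure_space (X : Type) : Type := MeasureSpace {
  measurable : (X -> Prop) -> Prop;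
  measurable_empty : measurable (fun _ => False);
  measurable_compl : forall A, measurable A -> measurable (fun x => ~ A x);
  measurable_union : forall A : nat -> X -> Prop,
      (forall n, measurable (A n)) -> measurable (fun x => exists n, A n x);
  mu : (X -> Prop) -> ereal;
  mu_nonneg : forall A, measurable A -> ereal_le (Fin 0) (mu A);
  mu_empty : mu (fun _ => False) = Fin 0;
  mu_sigma_additive : forall A : nat -> X -> Prop,
      (forall n, measurable (A n)) ->
      (forall n m x, n <> m -> A n x -> A m x -> False) ->
      esum_to (fun n => mu (A n)) (mu (fun x => exists n, A n x))
}.
Arguments measurable {X} _ _.
Arguments mu {X} _ _.

Definition nonatomic {X : Type} (M : measure_space X) : Prop :=
  forall A, measurable M A -> ereal_lt (Fin 0) (mu M A) ->
    exists B, measurable M B /\ (forall x, B x -> A x) /\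
              ereal_lt (Fin 0) (mu M B) /\ ereal_lt (mu M B) (mu M A).

Definition nonzero_measure {X : Type} (M : measure_space X) : Prop :=
  exists A, measurable M A /\ mu M A <> Fin 0.

(* "for mu-almost every x, P x": the set where P fails is contained in a
   measurable mu-null set (that set itself need not be measurable). *)
Definition ae {X : Type} (M : measure_space X) (P : X -> Prop) : Prop :=
  exists N, measurable M N /\ mu M N = Fin 0 /\ (forall x, ~ P x -> N x).

Record C : Type := mkC { Cre : R; Cim : R }.
Definition C0 : C := mkC 0 0.
Definition Cadd (a b : C) : C := mkC (Cre a + Cre b) (Cim a + Cim b).
Definition Cmul (a b : C) : C :=
  mkC (Cre a * Cre b - Cim a * Cim b) (Cre a * Cim b + Cim a * Cre b).
Definition Cconj (a : C) : C := mkC (Cre a) (- Cim a).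

(* inner product linear in the first argument, conjugate-linear in the second *)
Record hilbert_space : Type := HilbertSpace {
  hcarrier :> Type;
  hadd : hcarrier -> hcarrier -> hcarrier;
  hzero : hcarrier;
  hopp : hcarrier -> hcarrier;
  hscal : C -> hcarrier -> hcarrier;
  inner : hcarrier -> hcarrier -> C;
  hadd_assoc : forall u v w, hadd u (hadd v w) = hadd (hadd u v) w;
  hadd_comm : forall u v, hadd u v = hadd v u;
  hadd_zero : forall u, hadd u hzero = u;
  hadd_opp : forall u, hadd u (hopp u) = hzero;
  hscal_one : forall u, hscal (mkC 1 0) u = u;
  hscal_assoc : forall a b u, hscal a (hscal b u) = hscal (Cmul a b) u;
  hscal_distr_vec : forall a u v, hscal a (hadd u v) = hadd (hscal a u) (hscal a v);
  hscal_distr_scal : forall a b u, hscal (Cadd a b) u = hadd (hscal a u) (hscal b u);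
  inner_add_l : forall u v w, inner (hadd u v) w = Cadd (inner u w) (inner v w);
  inner_scal_l : forall a u w, inner (hscal a u) w = Cmul a (inner u w);
  inner_conj_sym : forall u v, inner v u = Cconj (inner u v);
  inner_pos : forall u, Cim (inner u u) = 0 /\ 0 <= Cre (inner u u);
  inner_definite : forall u, Cre (inner u u) = 0 -> u = hzero;
  hcomplete : forall s : nat -> hcarrier,
    (forall eps, eps > 0 -> exists N, forall n m, (n >= N)%nat -> (m >= N)%nat ->
        sqrt (Cre (inner (hadd (s n) (hopp (s m))) (hadd (s n) (hopp (s m))))) < eps) ->
    exists l, forall eps, eps > 0 -> exists N, forall n, (n >= N)%nat ->
        sqrt (Cre (inner (hadd (s n) (hopp l)) (hadd (s n) (hopp l)))) < eps
}.
Arguments hadd {h} _ _.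
Arguments hzero {h}.
Arguments hopp {h} _.
Arguments hscal {h} _ _.
Arguments inner {h} _ _.

Definition hnorm {H : hilbert_space} (u : H) : R := sqrt (Cre (inner u u)).

From Pilot Require Import Defs.
From Stdlib Require Import Reals Lra Lia List Classical ClassicalEpsilon
  FunctionalExtensionality PropExtensionality.
Open Scope R_scope.

(* Fix [f] and [d > 0], and let [b] bound [|e_x|^2].  If the points [x] with
   [|<f, e_x>|^2 >= d] were not covered by a null set, one could pick such
   points [x_1, ..., x_k] one after the other, each outside the null sets off
   which the earlier [e_(x_i)] are orthogonal, so that the [e_(x_i)] are
   pairwise orthogonal; Bessel's inequality then gives [k d <= b |f|^2] for
   every [k].  Taking [d = 1/(n+1)] and the union of the countably many
   exceptional null sets gives the claim. *)

Lemma C_ext (a b : Defs.C) : Cre a = Cre b -> Cim a = Cim b -> a = b.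
Proof. destruct a, b; simpl; intros -> ->; reflexivity. Qed.

Definition Cnorm2 (a : Defs.C) : R := Cre a * Cre a + Cim a * Cim a.

Lemma Cnorm2_ge0 (a : Defs.C) : 0 <= Cnorm2 a.
Proof. unfold Cnorm2; nra. Qed.

Lemma Cnorm2_le0 (a : Defs.C) : Cnorm2 a <= 0 -> a = C0.
Proof. unfold Cnorm2; intros h; apply C_ext; simpl; nra. Qed.

Section HilbertAlgebra.
Context {H : hilbert_space}.

Lemma inner_zero_l (w : H) : inner hzero w = C0.
Proof.
  pose proof (inner_add_l H hzero hzero w) as E.
  rewrite hadd_zero in E.
  destruct (inner hzero w) as [r i]; injection E; intros.
  apply C_ext; simpl; lra.
Qed.

Lemma inner_zero_r (w : H) : inner w hzero = C0.
Proof. rewrite inner_conj_sym, inner_zero_l; apply C_ext; simpl; lra. Qed.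

Lemma inner_add_r (w u v : H) : inner w (hadd u v) = Cadd (inner w u) (inner w v).
Proof.
  rewrite inner_conj_sym, inner_add_l, (inner_conj_sym H u w), (inner_conj_sym H v w).
  destruct (inner u w), (inner v w); apply C_ext; simpl; lra.
Qed.

Lemma inner_scal_r (w : H) (a : Defs.C) (u : H) :
  inner w (hscal a u) = Cmul (Cconj a) (inner w u).
Proof.
  rewrite inner_conj_sym, inner_scal_l, (inner_conj_sym H u w).
  destruct a, (inner u w); apply C_ext; simpl; lra.
Qed.

Definition orthogonal (u v : H) : Prop := inner u v = C0.

Lemma orthogonal_sym (u v : H) : orthogonal u v -> orthogonal v u.
Proof.
  unfold orthogonal; intros h; rewrite inner_conj_sym, h; apply C_ext; simpl; lra.
Qed.

Lemma Re_inner_self_le (u : H) (B : R) : hnorm u <= B -> Cre (inner u u) <= B * B.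
Proof.
  unfold hnorm; intros hB.
  destruct (inner_pos H u) as [_ hr].
  pose proof (sqrt_sqrt _ hr); pose proof (sqrt_pos (Cre (inner u u))); nra.
Qed.

Fixpoint fourier_sum (f : H) (l : list H) : H :=
  match l with
  | nil => hzero
  | v :: l' => hadd (hscal (inner f v) v) (fourier_sum f l')
  end.

Fixpoint coef_norm2_sum (f : H) (l : list H) : R :=
  match l with
  | nil => 0
  | v :: l' => Cnorm2 (inner f v) + coef_norm2_sum f l'
  end.

Lemma coef_norm2_sum_ge0 (f : H) (l : list H) : 0 <= coef_norm2_sum f l.
Proof.
  induction l as [|v l IH]; simpl; [lra|].
  pose proof (Cnorm2_ge0 (inner f v)); lra.
Qed.

Lemma coef_norm2_sum_ge (f : H) (l : list H) (d : R) :
  Forall (fun v => d <= Cnorm2 (inner f v)) l -> INR (length l) * d <= coef_norm2_sum f l.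
Proof.
  induction 1 as [|v l hv _ IH]; cbn [length coef_norm2_sum]; [simpl; lra|].
  rewrite S_INR; lra.
Qed.

Lemma inner_fourier_sum_orthogonal (f v : H) (l : list H) :
  Forall (orthogonal v) l -> inner v (fourier_sum f l) = C0.
Proof.
  induction 1 as [|w l hw _ IH]; simpl; [apply inner_zero_r|].
  rewrite inner_add_r, inner_scal_r, hw, IH; apply C_ext; simpl; ring.
Qed.

Lemma Re_inner_fourier_sum (f : H) (l : list H) :
  Cre (inner f (fourier_sum f l)) = coef_norm2_sum f l.
Proof.
  induction l as [|v l IH]; simpl; [rewrite inner_zero_r; reflexivity|].
  rewrite inner_add_r, inner_scal_r; cbn [Cadd Cre]; rewrite IH.
  unfold Cnorm2; destruct (inner f v); simpl; ring.
Qed.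

Lemma Re_norm2_fourier_sum_le (f : H) (l : list H) (b : R) :
  ForallOrdPairs orthogonal l -> Forall (fun v => Cre (inner v v) <= b) l ->
  Cre (inner (fourier_sum f l) (fourier_sum f l)) <= b * coef_norm2_sum f l.
Proof.
  induction 1 as [|v l hv _ IH]; simpl; intros hb.
  - rewrite inner_zero_r; simpl; lra.
  - inversion hb as [|? ? hvb hlb]; subst; specialize (IH hlb).
    rewrite !inner_add_l, !inner_add_r, !inner_scal_l, !inner_scal_r.
    rewrite (inner_conj_sym H v (fourier_sum f l)), (inner_fourier_sum_orthogonal f v l hv).
    destruct (inner_pos H v) as [hi hr].
    revert IH hvb hi hr.
    generalize (inner (fourier_sum f l) (fourier_sum f l)) (inner v v) (inner f v).
    intros [gr gi] [vr vi] [ar ai]; unfold Cnorm2; simpl; intros; subst vi; nra.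
Qed.

(* Bessel's inequality for an orthogonal family with [|v|^2 <= b]: with
   [g := fourier_sum f l] and [S := coef_norm2_sum f l], expanding
   [0 <= |f - g/b|^2] gives [0 <= |f|^2 - 2S/b + |g|^2/b^2 <= |f|^2 - S/b]. *)
Lemma bessel_orthogonal_bounded (f : H) (l : list H) (b : R) :
  0 < b -> ForallOrdPairs orthogonal l -> Forall (fun v => Cre (inner v v) <= b) l ->
  coef_norm2_sum f l <= b * Cre (inner f f).
Proof.
  intros hb ho hvb.
  pose proof (Re_norm2_fourier_sum_le f l b ho hvb) as hg.
  pose proof (Re_inner_fourier_sum f l) as hfg.
  pose proof (coef_norm2_sum_ge0 f l) as hS.
  set (t := - / b).
  assert (htb : t * b = -1) by (unfold t; field; lra).
  destruct (inner_pos H (hadd f (hscal (mkC t 0) (fourier_sum f l)))) as [_ hp].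
  rewrite !inner_add_l, !inner_add_r, !inner_scal_l, !inner_scal_r, (inner_conj_sym H f (fourier_sum f l)) in hp.
  revert hp hg hfg.
  generalize (inner f f) (inner f (fourier_sum f l))
    (inner (fourier_sum f l) (fourier_sum f l)) (coef_norm2_sum f l).
  intros [fr fi] [xr xi] [gr gi] S; simpl; intros hp hg hfg; subst xr.
  assert (0 <= b * (fr + t * S)).
  { apply Rmult_le_pos; [lra|].
    assert (t * t * gr <= t * t * (b * S)) by (apply Rmult_le_compat_l; nra).
    replace (t * t * (b * S)) with (t * (t * b) * S) in * by ring; rewrite htb in *; nra. }
  replace (b * (fr + t * S)) with (b * fr + t * b * S) in * by ring; rewrite htb in *; lra.
Qed.

End HilbertAlgebra.
Lemma set_ext {X : Type} (A B : X -> Prop) : (forall x, A x <-> B x) -> A = B.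
Proof.
  intros h; apply functional_extensionality; intros x.
  apply propositional_extensionality, h.
Qed.

Definition seq2 {T : Type} (a b : T) (n : nat) : T :=
  match n with O => a | S _ => b end.

Lemma union_seq2 {X : Type} (A B : X -> Prop) :
  (fun x => exists n, seq2 A B n x) = (fun x => A x \/ B x).
Proof.
  apply set_ext; intros x; split.
  - intros [[|n] h]; simpl in h; auto.
  - intros [h|h]; [exists O | exists 1%nat]; exact h.
Qed.

Lemma esum_to_zero (a : nat -> ereal) (s : ereal) :
  (forall n, a n = Fin 0) -> esum_to a s -> s = Fin 0.
Proof.
  intros ha hs.
  assert (hz : forall N, sum_f_R0 (fun n => fin_part (a n)) N = 0).
  { induction N; simpl; rewrite ha; simpl; lra. }
  destruct s as [l|]; simpl in hs.
  - destruct hs as [_ hcv]; f_equal.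
    apply (UL_sequence _ _ _ hcv); intros eps he; exists O; intros n _.
    rewrite hz; unfold R_dist; rewrite Rminus_0_r, Rabs_R0; lra.
  - destruct hs as [[n hn]|[_ hc]].
    + rewrite ha in hn; discriminate.
    + destruct (hc 0) as [N hN]; specialize (hN N (le_n N)); rewrite hz in hN; lra.
Qed.

Section NullSets.
Context {X : Type} (M : measure_space X).

Definition null_set (N : X -> Prop) : Prop := measurable M N /\ mu M N = Fin 0.

Lemma measurable_union2 (A B : X -> Prop) :
  measurable M A -> measurable M B -> measurable M (fun x => A x \/ B x).
Proof.
  intros hA hB; rewrite <- union_seq2; apply measurable_union; intros [|n]; assumption.
Qed.

Lemma measurable_inter (A B : X -> Prop) :
  measurable M A -> measurable M B -> measurable M (fun x => A x /\ B x).
Proof.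
  intros hA hB.
  replace (fun x => A x /\ B x) with (fun x => ~ (~ A x \/ ~ B x))
    by (apply set_ext; intros x; tauto).
  apply measurable_compl, measurable_union2; apply measurable_compl; assumption.
Qed.

Lemma measurable_guard (P : Prop) (A : X -> Prop) :
  measurable M A -> measurable M (fun x => P /\ A x).
Proof.
  intros hA; destruct (classic P) as [hP|hP].
  - replace (fun x => P /\ A x) with A by (apply set_ext; tauto); exact hA.
  - replace (fun x => P /\ A x) with (fun _ : X => False) by (apply set_ext; tauto).
    apply measurable_empty.
Qed.

Lemma fin_part_mu_ge0 (A : X -> Prop) : measurable M A -> 0 <= fin_part (mu M A).
Proof.
  intros hA; pose proof (mu_nonneg X M A hA) as h.
  destruct (mu M A); simpl in *; lra.
Qed.

(* [A] is the first term of the disjoint decomposition [A, B \ A, 0, 0, ...]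
   of [B], so the partial sums, which tend to [mu B = 0], start at [mu A]. *)
Lemma null_set_subset (A B : X -> Prop) :
  measurable M A -> (forall x, A x -> B x) -> null_set B -> null_set A.
Proof.
  intros hA hAB [hB zB]; split; [exact hA|].
  pose (D := fun n : nat => match n with
                            | O => A
                            | 1%nat => fun x => B x /\ ~ A x
                            | _ => fun _ => False end).
  assert (hD : forall n, measurable M (D n)).
  { intros [|[|n]]; simpl; [exact hA| |apply measurable_empty].
    apply measurable_inter; [|apply measurable_compl]; assumption. }
  assert (hdisj : forall n m x, n <> m -> D n x -> D m x -> False).
  { intros [|[|n]] [|[|m]] x hnm; simpl; try tauto; lia. }
  pose proof (mu_sigma_additive X M D hD hdisj) as hs.
  replace (fun x => exists n, D n x) with B in hs.
  2:{ apply set_ext; intros x; split.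
      - intros hx; destruct (classic (A x)); [exists O | exists 1%nat]; simpl; auto.
      - intros [[|[|n]] h]; simpl in h; intuition. }
  rewrite zB in hs; destruct hs as [hfin hcv].
  assert (hgrow : Un_growing (fun N => sum_f_R0 (fun n => fin_part (mu M (D n))) N)).
  { intros N; cbn [sum_f_R0]; pose proof (fin_part_mu_ge0 _ (hD (S N))); lra. }
  pose proof (growing_ineq _ _ hgrow hcv O) as h0; simpl in h0.
  pose proof (hfin O) as hfin0; pose proof (mu_nonneg X M A hA) as hnn; simpl in *.
  destruct (mu M A) as [r|]; [f_equal; simpl in *; lra | congruence].
Qed.

Lemma null_set_countable_union (N : nat -> X -> Prop) :
  (forall n, null_set (N n)) -> null_set (fun x => exists n, N n x).
Proof.
  intros hN; split; [apply measurable_union; intros n; apply hN|].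
  pose (D := fun n x => N n x /\ ~ exists k, (k < n)%nat /\ N k x).
  assert (hD : forall n, measurable M (D n)).
  { intros n; apply measurable_inter; [apply hN|].
    apply measurable_compl, measurable_union; intros k; apply measurable_guard, hN. }
  assert (hdisj : forall n m x, n <> m -> D n x -> D m x -> False).
  { intros n m x hnm [hn hn'] [hm hm'].
    destruct (Nat.lt_total n m) as [h|[h|h]]; [apply hm'; eauto | contradiction | apply hn'; eauto]. }
  pose proof (mu_sigma_additive X M D hD hdisj) as hs.
  replace (fun x => exists n, D n x) with (fun x => exists n, N n x) in hs.
  2:{ apply set_ext; intros x; split; [|intros [n [h _]]; eauto].
      intros hx.
      destruct (Wf_nat.dec_inh_nat_subset_has_unique_least_element (fun n => N n x)
                  (fun n => classic _) hx) as [m [[hm hmin] _]].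
      exists m; split; [exact hm|]; intros [k [hk hNk]]; specialize (hmin k hNk); lia. }
  apply (esum_to_zero _ _ (fun n => proj2 (null_set_subset (D n) (N n) (hD n)
           (fun x h => proj1 h) (hN n))) hs).
Qed.

Lemma null_set_union2 (A B : X -> Prop) :
  null_set A -> null_set B -> null_set (fun x => A x \/ B x).
Proof.
  intros hA hB; rewrite <- union_seq2; apply null_set_countable_union; intros [|n]; assumption.
Qed.

Lemma ae_mono (P Q : X -> Prop) : (forall x, P x -> Q x) -> ae M P -> ae M Q.
Proof. intros hPQ [N [hm [hz hN]]]; exists N; repeat split; auto. Qed.

Lemma ae_countable (P : nat -> X -> Prop) :
  (forall n, ae M (P n)) -> ae M (fun x => forall n, P n x).
Proof.
  intros hP.
  destruct (choice (fun n N => null_set N /\ forall x, ~ P n x -> N x)) as [N hN].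
  { intros n; destruct (hP n) as [N [hm [hz hc]]]; exists N; repeat split; auto. }
  destruct (null_set_countable_union N (fun n => proj1 (hN n))) as [hm hz].
  exists (fun x => exists n, N n x); repeat split; auto.
  intros x hx; destruct (not_all_ex_not _ _ hx) as [n hn]; exists n; apply hN, hn.
Qed.

Lemma not_ae_escapes (P N : X -> Prop) :
  ~ ae M P -> null_set N -> exists x, ~ P x /\ ~ N x.
Proof.
  intros hP [hm hz]; apply NNPP; intros hno; apply hP.
  exists N; repeat split; auto.
  intros x hx; apply NNPP; intros hNx; apply hno; eauto.
Qed.

End NullSets.

Lemma le0_of_lt_inv_succ (c : R) : (forall n : nat, c < / INR (S n)) -> c <= 0.
Proof.
  intros hc; apply Rnot_lt_le; intros hpos.
  destruct (archimed_cor1 c hpos) as [[|m] [hm hm0]]; [lia|].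
  specialize (hc m); lra.
Qed.

Section OrthogonalPoints.
Context {X : Type} (M : measure_space X) {H : hilbert_space} (e : X -> H).
Hypothesis ae_orthogonal : ae M (fun x => ae M (fun y => orthogonal (e x) (e y))).

Lemma orthogonal_lists_outside_ae (P : X -> Prop) :
  ~ ae M P -> forall k, exists l, length l = k /\ Forall (fun x => ~ P x) l /\
                                  ForallOrdPairs orthogonal (map e l).
Proof.
  intros hP.
  destruct ae_orthogonal as [N0 [mN0 [zN0 hN0]]].
  enough (hinv : forall k, exists l N, length l = k /\ null_set M N /\ (forall x, N0 x -> N x) /\
    Forall (fun x => ~ P x /\ forall y, ~ orthogonal (e x) (e y) -> N y) l /\
    ForallOrdPairs orthogonal (map e l)).
  { intros k; destruct (hinv k) as (l & N & hk & _ & _ & hl & ho).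
    exists l; split; [exact hk | split; [|exact ho]].
    eapply Forall_impl; [|exact hl]; intros x [hx _]; exact hx. }
  induction k as [|k IH].
  { exists nil, N0; repeat split; auto; constructor. }
  destruct IH as (l & N & hk & hN & hN0N & hl & ho).
  destruct (not_ae_escapes M P N hP hN) as (y & hPy & hNy).
  assert (hy : ae M (fun z => orthogonal (e y) (e z)))
    by (apply NNPP; intros h; apply hNy, hN0N, hN0, h).
  destruct hy as (Ny & mNy & zNy & hNy').
  exists (y :: l), (fun z => N z \/ Ny z); split; [|split; [|split; [|split]]].
  - simpl; congruence.
  - apply null_set_union2; [exact hN | split; assumption].
  - intros x hx; left; auto.
  - constructor; [split; [exact hPy | intros z hz; right; auto]|].
    eapply Forall_impl; [|exact hl]; intros x [hx hxN]; split; [exact hx|].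
    intros z hz; left; auto.
  - simpl; constructor; [|exact ho].
    apply Forall_map; eapply Forall_impl; [|exact hl]; intros x [_ hxN].
    apply orthogonal_sym, NNPP; intros h; exact (hNy (hxN y h)).
Qed.

Lemma ae_Cnorm2_inner_lt (f : H) (b : R) :
  0 < b -> (forall x, Cre (inner (e x) (e x)) <= b) ->
  forall d, 0 < d -> ae M (fun x => Cnorm2 (inner f (e x)) < d).
Proof.
  intros hb hbound d hd; apply NNPP; intros hnot.
  destruct (INR_unbounded (b * Cre (inner f f) / d)) as [k hk].
  destruct (orthogonal_lists_outside_ae _ hnot k) as (l & hlen & hl & ho).
  assert (hbessel : coef_norm2_sum f (map e l) <= b * Cre (inner f f)).
  { apply bessel_orthogonal_bounded; [exact hb | exact ho |].
    apply Forall_map, Forall_forall; intros x _; apply hbound. }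
  assert (hcount : INR k * d <= coef_norm2_sum f (map e l)).
  { rewrite <- hlen, <- (length_map e); apply coef_norm2_sum_ge.
    apply Forall_map; eapply Forall_impl; [|exact hl]; intros x hx; apply Rnot_lt_le, hx. }
  apply (Rmult_lt_compat_r d) in hk; [|exact hd].
  replace (b * Cre (inner f f) / d * d) with (b * Cre (inner f f)) in hk by (field; lra).
  lra.
Qed.

End OrthogonalPoints.

Theorem mainTheorem6 (X : Type) (M : measure_space X)
  (H : hilbert_space) (e : X -> H) :
  nonatomic M ->
  nonzero_measure M ->
  (exists B : R, forall x, hnorm (e x) <= B) ->
  ae M (fun x => ae M (fun y => inner (e x) (e y) = C0)) ->
  forall f : H, ae M (fun x => inner f (e x) = C0).
Proof.
  intros _ _ [B hB] hae f.
  assert (hbound : forall x, Cre (inner (e x) (e x)) <= B * B + 1)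
    by (intros x; pose proof (Re_inner_self_le (e x) B (hB x)); lra).
  assert (hsmall : forall n, ae M (fun x => Cnorm2 (inner f (e x)) < / INR (S n))).
  { intros n; apply (ae_Cnorm2_inner_lt M e hae f (B * B + 1)); [nra | exact hbound |].
    apply Rinv_0_lt_compat, lt_0_INR; lia. }
  apply (ae_mono M _ _ (fun x hx => Cnorm2_le0 _ (le0_of_lt_inv_succ _ hx))).
  exact (ae_countable M _ hsmall).
Qed.
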